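(* Let $L$ be a simple $3$-connected planar graph with at least four vertices, with a fixed planar embedding, and let $r_0,r_1$ be vertices on the outer face of $L$ such that $(r_0,r_1)$ is an edge of $L$. Let $L'=L-(r_0,r_1)$ (delete the edge, keep the vertices) and let $C$ be the boundary of the outer face of $L'$, which is a simple cycle. Then every non-trivial bridge of $C$ in $L'$ has at least three vertices of attachment.
   Context: For a subgraph $H$ of a graph $G$, a vertex of attachment of $H$ is a vertex of $H$ incident with some edge of $G$ not belonging to $H$. For a cycle $J$ of $G$, a bridge of $J$ in $G$ is a subgraph $B$ of $G$ such that (1) every vertex of attachment of $B$ is a vertex of $J$, (2) $B$ is not a subgraph of $J$, and (3) no proper subgraph of $B$ has both properties (1) and (2). A bridge consisting of a single chord of $J$ is called trivial; all other bridges are non-trivial. *)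

(* Plane graphs are represented combinatorially by rotation
   systems (combinatorial maps) of genus 0. *)
From mathcomp Require Import all_boot.
Set Implicit Arguments.
Unset Strict Implicit.
Unset Printing Implicit Defensive.

Section Maps.
Variables (T D : finType).

(* darts D, hd d = vertex at which dart d starts, alpha = reversal of a dart,
   sigma = rotation around the vertex.                                      *)

Definition map_adj (hd : D -> T) (alpha : D -> D) : rel T :=
  fun x y => [exists d, (hd d == x) && (hd (alpha d) == y)].

Definition rotation_system (hd : D -> T) (alpha sigma : D -> D) : Prop :=
  [/\ involutive alpha, forall d, alpha d != d, injective sigma,
      forall d, hd (sigma d) = hd d
    & (forall d d', hd d = hd d' -> fconnect sigma d d') /\
      (forall x, exists d, hd d = x)].

(* face permutation: faces are its orbits *)
Definition face_perm (alpha sigma : D -> D) : D -> D := fun d => sigma (alpha d).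

Definition connected_map (alpha sigma : D -> D) : Prop :=
  forall d d', connect [rel a b | (b == alpha a) || (b == sigma a)] d d'.

(* planar embedding: connected rotation system of Euler genus 0 *)
Definition planar_map (hd : D -> T) (alpha sigma : D -> D) : Prop :=
  [/\ rotation_system hd alpha sigma, connected_map alpha sigma
    & #|T| + fcard (face_perm alpha sigma) D = #|D| %/ 2 + 2].

Definition simple_map (hd : D -> T) (alpha : D -> D) : Prop :=
  (forall d, hd (alpha d) != hd d) /\
  (forall d d', hd d = hd d' -> hd (alpha d) = hd (alpha d') -> d = d').

Definition on_face (hd : D -> T) (phi : D -> D) (o : D) (x : T) : bool :=
  [exists d, fconnect phi o d && (hd d == x)].

(* deleting the edge whose darts form e: rotation skips the deleted darts *)
Definition del_rot (sigma : D -> D) (e : {set D}) : D -> D :=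
  fun d => if sigma d \in e then sigma (sigma d) else sigma d.

Definition del_adj (hd : D -> T) (alpha : D -> D) (e : {set D}) : rel T :=
  fun x y => [exists d, [&& d \notin e, hd d == x & hd (alpha d) == y]].

End Maps.

Section Graphs.
Variable T : finType.

Definition k_connected (g : rel T) (k : nat) : Prop :=
  k < #|T| /\
  forall S : {set T}, #|S| < k -> forall x y, x \notin S -> y \notin S ->
    connect [rel a b | [&& g a b, a \notin S & b \notin S]] x y.

Definition edges (g : rel T) : {set {set T}} :=
  [set e : {set T} | [exists x, exists y, g x y && (e == [set x; y])]].

Definition subgraph (g : rel T) (V : {set T}) (E : {set {set T}}) : bool :=
  (E \subset edges g) && [forall e in E, e \subset V].

Definition attachments (g : rel T) (V : {set T}) (E : {set {set T}}) : {set T} :=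
  [set x in V | [exists e in edges g, (x \in e) && (e \notin E)]].

Definition bridge_cond (g : rel T) (VJ : {set T}) (EJ : {set {set T}})
    (V : {set T}) (E : {set {set T}}) : bool :=
  [&& subgraph g V E, attachments g V E \subset VJ
    & ~~ ((V \subset VJ) && (E \subset EJ))].

Definition is_bridge (g : rel T) (VJ : {set T}) (EJ : {set {set T}})
    (V : {set T}) (E : {set {set T}}) : Prop :=
  bridge_cond g VJ EJ V E /\
  forall (V' : {set T}) (E' : {set {set T}}),
    V' \subset V -> E' \subset E -> (V', E') != (V, E) ->
    ~~ bridge_cond g VJ EJ V' E'.

Definition trivial_bridge (V : {set T}) (E : {set {set T}}) : bool :=
  [exists e : {set T}, (E == [set e]) && (V == e)].

End Graphs.

(* Since L - r0r1 is still connected, Euler's formula forces the two sides of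
   the edge r0r1 to be distinct faces of L (in a map of genus 0 an edge with
   the same face on both sides is a cut edge, by Euler's inequality
   V - E + F <= 2c applied after deleting it).  Deleting the edge merges these
   two faces, so both r0 and r1 lie on the outer cycle C of L'.
   By minimality, a non-trivial bridge B of C consists of the component K of
   an inner vertex v in L' - C together with the edges leaving K.  If B had at
   most two attachments, 3-connectivity of L would give a path from v to a
   vertex of C (which has at least three vertices) avoiding them; this path
   would have to leave K through an edge of B ending at some b in C, and b is
   an attachment because it also lies on an edge of C, which is not in B. *)

From mathcomp Require Import all_boot.
From mathcomp Require Import fingroup perm zify.
Set Implicit Arguments.
Unset Strict Implicit.
Unset Printing Implicit Defensive.

Lemma connect_forward_closed (T : finType) (r : rel T) (P : pred T) x y :
  (forall a b, P a -> r a b -> P b) -> connect r x y -> P x -> P y.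
Proof.
move=> clP /connectP [p pth ->] {y}.
by elim: p x pth => //= z p IH x /andP [rxz pth] Px; apply: IH pth (clP _ _ Px rxz).
Qed.

Lemma porbit_fconnect (D : finType) (p : {perm D}) (f : D -> D) :
  p =1 f -> forall u w, (w \in porbit p u) = fconnect f u w.
Proof.
move=> pf u w; apply/porbitP/idP => [[i ->]|h].
- by rewrite permX (eq_iter pf) fconnect_iter.
- by exists (findex f u w); rewrite permX (eq_iter pf) iter_findex.
Qed.

Lemma card_porbits_fcard (D : finType) (p : {perm D}) (f : D -> D) :
  p =1 f -> #|porbits p| = fcard f D.
Proof.
move=> pf; have finj : injective f by move=> x y; rewrite -!pf; apply: perm_inj.
have fsym : connect_sym (frel f) by move=> x y; apply: fconnect_sym.
have -> : porbits p = porbit p @: [set d | roots (frel f) d].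
  apply/setP => P; apply/imsetP/imsetP => [[d _ ->]|[d _ ->]]; last by exists d.
  exists (root (frel f) d); first by rewrite inE roots_root.
  by apply/eqP; rewrite eq_porbit_mem (porbit_fconnect pf) fsym connect_root.
rewrite card_in_imset; first by apply: eq_card => d; rewrite !inE andbT.
move=> x y; rewrite !inE => /eqP rx /eqP ry /eqP.
rewrite eq_porbit_mem (porbit_fconnect pf) => cyx.
by rewrite -rx -ry; apply/(rootP fsym); rewrite fsym.
Qed.

(* The submap of the map (a, s) that keeps only the edges {x, a x} with x in X:
   a dart outside X is fixed by alpha_on X, so it keeps its place in the
   vertex rotation s but belongs to no edge.  The faces are the orbits of
   face_on X, the vertices those of s. *)
Section EulerInequality.
Variables (D : finType) (a : D -> D) (s : {perm D}).
Hypotheses (aK : involutive a) (a_nfix : forall x, a x != x).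

Definition alpha_fun (X : {set D}) z := if (z \in X) && (a z \in X) then a z else z.

Lemma alpha_fun_inj X : injective (alpha_fun X).
Proof.
move=> z1 z2; rewrite /alpha_fun.
case: ifP => [/andP [h1 h1'] | h1]; case: ifP => [/andP [h2 h2'] | h2] //.
- by move/(congr1 a); rewrite !aK.
- by move=> E; move: h2; rewrite -E aK h1 h1'.
- by move=> E; move: h1; rewrite E aK h2 h2'.
Qed.

Definition alpha_on X : {perm D} := perm (@alpha_fun_inj X).

Definition face_on X : {perm D} := (alpha_on X * s)%g.

Definition map_rel (X : {set D}) : rel D := fun x y =>
  [|| y == s x, x == s y | [&& x \in X, a x \in X & y == a x]].

Definition component X u := [set w | connect (map_rel X) u w].

Definition ncomponents X := #|[set component X u | u : D]|.

Definition alpha_closed (X : {set D}) := forall x, (a x \in X) = (x \in X).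

Lemma map_rel_sym X : symmetric (map_rel X).
Proof.
suff imp x y : map_rel X x y -> map_rel X y x by move=> x y; apply/idP/idP; apply: imp.
rewrite /map_rel => /or3P [->|->|/and3P [h1 h2 /eqP ->]]; rewrite ?orbT //.
by rewrite aK h1 h2 eqxx !orbT.
Qed.

Lemma map_rel_sub (X Y : {set D}) : Y \subset X -> subrel (map_rel Y) (map_rel X).
Proof.
move=> sYX x y; rewrite /map_rel => /or3P [->|->|/and3P [h1 h2 h3]]; rewrite ?orbT //.
by rewrite (subsetP sYX _ h1) (subsetP sYX _ h2) h3 !orbT.
Qed.

Lemma component_eq X u v : connect (map_rel X) u v -> component X u = component X v.
Proof.
move=> cuv; apply/setP => w; rewrite !inE; apply/idP/idP => h.
- by apply: connect_trans h; rewrite (sym_connect_sym (@map_rel_sym X)).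
- exact: connect_trans cuv h.
Qed.

Lemma porbit_face_on_connect X u w :
  w \in porbit (face_on X) u -> connect (map_rel X) u w.
Proof.
have step z : connect (map_rel X) z (face_on X z).
  rewrite permM permE /alpha_fun; case: ifP => [/andP [h1 h2] | _].
  - apply: (@connect_trans _ _ (a z)); apply: connect1.
    + by rewrite /map_rel h1 h2 eqxx !orbT.
    + by rewrite /map_rel eqxx.
  - by apply: connect1; rewrite /map_rel eqxx.
case/porbitP => i ->; elim: i => [|i IH]; first by rewrite expg0 perm1.
by rewrite expgSr permM; apply: connect_trans IH (step _).
Qed.

Lemma alpha_on0 : alpha_on set0 = 1%g.
Proof. by apply/permP => z; rewrite permE perm1 /alpha_fun inE. Qed.

Lemma ncomponents0 : ncomponents set0 = #|porbits s|.
Proof.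
suff compE u : component set0 u = porbit s u by rewrite /ncomponents /porbits (eq_imset _ compE).
have porbit_s b : porbit s (s b) = porbit s b by have := porbit_perm s 1 b; rewrite expg1.
apply/setP => w; rewrite inE; apply/idP/idP.
- move=> cw; apply: (connect_forward_closed (P := fun w => w \in porbit s u)) cw (porbit_id _ _).
  move=> b c Pb; rewrite /map_rel inE andFb orbF => /orP [/eqP -> | /eqP Eb].
  + by rewrite -eq_porbit_mem porbit_s eq_porbit_mem.
  + by rewrite -eq_porbit_mem -porbit_s -Eb eq_porbit_mem.
- case/porbitP => i ->; elim: i => [|i IH]; first by rewrite expg0 perm1.
  by rewrite expgSr permM; apply: connect_trans IH (connect1 _); rewrite /map_rel eqxx.
Qed.

Section DeleteEdge.
Variables (X : {set D}) (x : D).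
Hypotheses (clX : alpha_closed X) (xX : x \in X).
Let Y := X :\ x :\ a x.

Lemma alpha_closedD : alpha_closed Y.
Proof.
by move=> z; rewrite !inE clX !(can2_eq aK aK) aK andbCA.
Qed.

Lemma subsetD_edge : Y \subset X.
Proof. by apply/subsetP => z; rewrite !inE => /and3P []. Qed.

Lemma cardsD_edge : #|X| = #|Y|.+2.
Proof.
have axX : a x \in X by rewrite clX.
by rewrite (cardsD1 x) xX (cardsD1 (a x) (X :\ x)) !inE a_nfix axX.
Qed.

Lemma alpha_onD : alpha_on X = (tperm x (a x) * alpha_on Y)%g.
Proof.
apply/permP => z; rewrite permM.
have axX : a x \in X by rewrite clX.
case: (tpermP x (a x) z) => [->|->|/eqP zx /eqP zax]; rewrite !permE /alpha_fun.
- by rewrite xX axX /= !inE eqxx.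
- by rewrite aK axX xX /= !inE eqxx /= andbF.
- by rewrite !inE !(can2_eq aK aK) aK zx zax.
Qed.

Lemma card_porbits_face_onD_same : x \in porbit (face_on Y) (a x) ->
  #|porbits (face_on X)| = (#|porbits (face_on Y)|).+1.
Proof.
move=> hin; have := porbits_mul_tperm (face_on Y) x (a x).
by rewrite hin eq_sym a_nfix /face_on mulgA -alpha_onD addn0 addn1.
Qed.

Lemma card_porbits_face_onD_split : x \notin porbit (face_on Y) (a x) ->
  (#|porbits (face_on X)|).+1 = #|porbits (face_on Y)|.
Proof.
move=> hin; have := porbits_mul_tperm (face_on Y) x (a x).
by rewrite hin eq_sym a_nfix /face_on mulgA -alpha_onD addn1 addn2 => -[].
Qed.

Lemma map_relD b c : map_rel X b c ->
  [|| map_rel Y b c, (b == x) && (c == a x) | (b == a x) && (c == x)].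
Proof.
rewrite /map_rel => /or3P [->|->|/and3P [h1 h2 /eqP h3]]; rewrite ?orbT //.
have [eb|bx] := eqVneq b x; first by rewrite h3 eb !eqxx /= ?orbT.
have [eb|bax] := eqVneq b (a x); first by rewrite h3 eb aK !eqxx /= ?orbT.
by rewrite !inE !(can2_eq aK aK) aK bx bax h1 h2 h3 eqxx /= ?orbT.
Qed.

Lemma connectD u w : connect (map_rel X) u w ->
  [|| connect (map_rel Y) u w, connect (map_rel Y) u x | connect (map_rel Y) u (a x)].
Proof.
move=> cuw; apply: (connect_forward_closed (P := fun w =>
  [|| connect (map_rel Y) u w, connect (map_rel Y) u x | connect (map_rel Y) u (a x)]))
  cuw _; last by rewrite connect0.
move=> b c /or3P [cb|->|->]; rewrite ?orbT //.
case/map_relD/or3P => [rbc|/andP [/eqP ebx _]|/andP [/eqP ebax _]].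
- by rewrite (connect_trans cb (connect1 rbc)).
- by rewrite -ebx cb orbT.
- by rewrite -ebax cb !orbT.
Qed.

Lemma ncomponentsD_le : ncomponents Y <= (ncomponents X).+1.
Proof.
rewrite /ncomponents.
have sub : [set component Y u | u : D] \subset
   [set component Y x; component Y (a x)] :|: ([set component X u | u : D] :\ component X x).
  apply/subsetP => C /imsetP [u _ ->].
  have [cux|ncux] := boolP (connect (map_rel Y) u x).
    by rewrite !inE (component_eq cux) eqxx.
  have [cuax|ncuax] := boolP (connect (map_rel Y) u (a x)).
    by rewrite !inE (component_eq cuax) eqxx orbT.
  have cXY w : connect (map_rel X) u w -> connect (map_rel Y) u w.
    by move/connectD; rewrite (negbTE ncux) (negbTE ncuax) !orbF.
  have eqc : component Y u = component X u.
    apply/setP => w; rewrite !inE; apply/idP/idP; last exact: cXY.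
    by apply: connect_sub => b c /(map_rel_sub subsetD_edge) /connect1.
  rewrite !inE eqc imset_f // andbT orbC; apply/orP; left.
  by apply: contra ncux => /eqP/setP/(_ x); rewrite !inE connect0 => /cXY.
have := subset_leq_card sub; rewrite cardsU.
have h1 : #|[set component Y x; component Y (a x)]| <= 2 by rewrite cards2; case: (_ != _).
have hm : component X x \in [set component X u | u : D] by apply: imset_f.
have h2 := cardsD1 (component X x) [set component X u | u : D]; rewrite hm in h2.
lia.
Qed.

Lemma connectD_same :
  x \in porbit (face_on Y) (a x) -> connect (map_rel X) =2 connect (map_rel Y).
Proof.
move=> xin.
have cax : connect (map_rel Y) x (a x).
  by rewrite (sym_connect_sym (@map_rel_sym Y)); apply: porbit_face_on_connect.
move=> u w; apply/idP/idP; apply: connect_sub => b c.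
- case/map_relD/or3P => [h|/andP [/eqP -> /eqP ->]|/andP [/eqP -> /eqP ->]].
  + exact: connect1.
  + exact: cax.
  + by rewrite (sym_connect_sym (@map_rel_sym Y)).
- by move/(map_rel_sub subsetD_edge) /connect1.
Qed.

End DeleteEdge.

(* Euler's inequality V - E + F <= 2c with E = #|X|/2, by deleting the edges
   one at a time: a deletion changes F by one, and c can only grow when F
   grows. *)
Lemma euler_inequality X : alpha_closed X ->
  (#|porbits (face_on X)| + #|porbits s|).*2 <= #|X| + 4 * ncomponents X.
Proof.
have [n] := ubnP #|X|; elim: n X => // n IH X ltX clX.
have [->|[x xX]] := set_0Vmem X.
  by rewrite /face_on alpha_on0 mul1g cards0 -ncomponents0 -muln2; lia.
have cX := cardsD_edge clX xX.
have IHY := IH (X :\ x :\ a x) (ltac:(lia)) (alpha_closedD x clX).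
case: (boolP (x \in porbit (face_on (X :\ x :\ a x)) (a x))) => hin.
- have -> : ncomponents X = ncomponents (X :\ x :\ a x).
    suff compE u : component X u = component (X :\ x :\ a x) u.
      by rewrite /ncomponents (eq_imset _ compE).
    by apply/setP => w; rewrite !inE (connectD_same hin).
  have := card_porbits_face_onD_same clX xX hin; lia.
- have := card_porbits_face_onD_split clX xX hin.
  have := ncomponentsD_le xX; lia.
Qed.

(* The first hypothesis is Euler's formula V + F = E + 2. *)
Lemma planar_edge_faces_distinct x :
  #|porbits s| + #|porbits (face_on setT)| = #|D| %/ 2 + 2 ->
  (forall u v, connect (map_rel ([set: D] :\ x :\ a x)) u v) ->
  x \notin porbit (face_on setT) (a x).
Proof.
move=> euler conn; apply/negP => hin.
have clT : alpha_closed setT by move=> z; rewrite !inE.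
have xT : x \in [set: D] by rewrite inE.
have cT := cardsD_edge clT xT; rewrite cardsT in cT.
have core := euler_inequality (alpha_closedD x clT).
have nc : ncomponents ([set: D] :\ x :\ a x) <= 1.
  rewrite /ncomponents -(cards1 [set: D]); apply: subset_leq_card.
  apply/subsetP => C /imsetP [u _ ->]; rewrite inE; apply/eqP/setP => w.
  by rewrite !inE conn.
have faces_del : #|porbits (face_on ([set: D] :\ x :\ a x))| = (#|porbits (face_on setT)|).+1.
  have := porbits_mul_tperm (face_on setT) x (a x).
  by rewrite hin eq_sym a_nfix /face_on (alpha_onD clT xT) !mulgA tperm2 mul1g addn0 addn1.
lia.
Qed.

End EulerInequality.

Section Bridges.
Variables (T : finType) (g : rel T) (VC : {set T}) (EC : {set {set T}}).
Implicit Types (V : {set T}) (E : {set {set T}}).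

Lemma edgesP f : reflect (exists x y, g x y /\ f = [set x; y]) (f \in edges g).
Proof.
rewrite inE; apply: (iffP existsP) => [[x /existsP [y /andP [gxy /eqP ->]]]|[x [y [gxy ->]]]].
  by exists x, y.
by exists x; apply/existsP; exists y; rewrite gxy eqxx.
Qed.

Lemma edges_at_inner V E u f : u \in V -> u \notin attachments g V E ->
  f \in edges g -> u \in f -> f \in E.
Proof.
move=> uV uA fg uf; apply: contraNT uA => fE.
by rewrite inE uV; apply/existsP; exists f; rewrite fg uf fE.
Qed.

Lemma bridge_inner_vertex V E : is_bridge g VC EC V E -> ~~ trivial_bridge V E ->
  exists2 v, v \in V & v \notin VC.
Proof.
case=> bc minVE ntriv; case/and3P: (bc) => /andP [Eg EV] _ notsub.
have [VVC|/subsetPn [v vV vVC]] := boolP (V \subset VC); last by exists v.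
exfalso; move: notsub; rewrite VVC /= => /subsetPn [f fE fEC].
have fV : f \subset V by move/forall_inP: EV; apply.
have bcf : bridge_cond g VC EC f [set f].
  apply/and3P; split.
  - by rewrite /subgraph sub1set (subsetP Eg) //=; apply/forall_inP => f' /set1P ->.
  - apply/subsetP => y /setIdP [yf _].
    exact: subsetP VVC _ (subsetP fV _ yf).
  - by rewrite sub1set (negbTE fEC) andbF.
have [[eV eE]|ne] := eqVneq (f, [set f]) (V, E).
  by move: ntriv; rewrite -eV -eE => /existsPn /(_ f); rewrite !eqxx.
by move: (minVE f [set f] fV (ltac:(by rewrite sub1set)) ne); rewrite bcf.
Qed.

Definition inner_rel : rel T := [rel x y | [&& g x y, x \notin VC & y \notin VC]].

Section InnerComponent.
Hypothesis g_sym : symmetric g.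
Hypothesis VC_edge : {in VC, forall y, exists2 z, z \in VC & g y z}.
Variables (V : {set T}) (E : {set {set T}}) (v : T).
Hypotheses (bridgeVE : is_bridge g VC EC V E) (vV : v \in V) (vVC : v \notin VC).

Let A := attachments g V E.
Let R := [set u | connect inner_rel v u].

Lemma attachments_subVC : A \subset VC.
Proof. by case: bridgeVE => /and3P []. Qed.

Lemma bridge_edge_at_inner u b : u \in V -> u \notin VC -> g u b ->
  [set u; b] \in E /\ b \in V.
Proof.
move=> uV uVC gub; case: bridgeVE => /and3P [/andP [_ EV] _ _] _.
have uA : u \notin A by apply: contra uVC; apply: (subsetP attachments_subVC).
have fE : [set u; b] \in E.
  by apply: edges_at_inner uV uA _ (set21 _ _); apply/edgesP; exists u, b.
by split => //; move/forall_inP: EV => /(_ _ fE) /subsetP; apply; apply: set22.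
Qed.

Lemma inner_comp_sub u : u \in R -> (u \in V) && (u \notin VC).
Proof.
rewrite inE => cvu.
apply: (connect_forward_closed (P := fun u => (u \in V) && (u \notin VC))) cvu _;
  last by rewrite vV vVC.
move=> a b /andP [aV aVC] /and3P [gab _ bVC]; rewrite bVC andbT.
by case: (bridge_edge_at_inner aV aVC gab).
Qed.

Lemma inner_comp_step u b : u \in R -> g u b -> b \notin VC -> b \in R.
Proof.
move=> uR gub bVC; have /andP [_ uVC] := inner_comp_sub uR.
move: uR; rewrite !inE => cu; apply: connect_trans cu (connect1 _).
by rewrite /inner_rel /= gub uVC.
Qed.

Let V' := R :|: [set y | [exists u in R, g u y]].
Let E' := [set f in edges g | [exists u in R, u \in f]].

Lemma inner_comp_bridge_cond : bridge_cond g VC EC V' E'.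
Proof.
apply/and3P; split.
- apply/andP; split; first by apply/subsetP => f /setIdP [].
  apply/forall_inP => f /setIdP [/edgesP [x [y [gxy ->]]] /exists_inP [u uR uf]].
  have V'_nbr z : g u z -> z \in V'.
    by move=> guz; rewrite !inE; apply/orP; right; apply/exists_inP; exists u.
  apply/subsetP => z /set2P [] ->; case/set2P: uf => eu; subst u.
  + by rewrite inE uR.
  + by apply: V'_nbr; rewrite g_sym.
  + exact: V'_nbr.
  + by rewrite inE uR.
- apply/subsetP => x /setIdP [xV' /exists_inP [f fg /andP [xf fE']]].
  have xR : x \notin R.
    by apply: contra fE' => xR; rewrite inE fg; apply/exists_inP; exists x.
  move: xV'; rewrite inE (negbTE xR) inE => /exists_inP [u uR gux].
  by apply: contraR xR; apply: inner_comp_step uR gux.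
- apply: contra vVC => /andP [/subsetP /(_ v) + _]; apply.
  by rewrite !inE connect0.
Qed.

Lemma bridge_edgesE : E = E'.
Proof.
case: bridgeVE => _ minVE.
have V'V : V' \subset V.
  apply/subsetP => y /setUP [/inner_comp_sub /andP [] //|].
  rewrite inE => /exists_inP [u /inner_comp_sub /andP [uV uVC] guy].
  by case: (bridge_edge_at_inner uV uVC guy).
have E'E : E' \subset E.
  apply/subsetP => f /setIdP [fg /exists_inP [u /inner_comp_sub /andP [uV uVC] uf]].
  apply: edges_at_inner uV _ fg uf.
  by apply: contra uVC; apply: (subsetP attachments_subVC).
have [[_ <-] //|ne] := eqVneq (V', E') (V, E).
by move: (minVE V' E' V'V E'E ne); rewrite inner_comp_bridge_cond.
Qed.

Lemma inner_comp_exit u b : u \in R -> g u b -> b \notin A -> b \in R.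
Proof.
move=> uR gub bA; have /andP [uV uVC] := inner_comp_sub uR.
have [bVC|] := boolP (b \in VC); last exact: inner_comp_step uR gub.
have [_ bV] := bridge_edge_at_inner uV uVC gub.
have [z zVC gbz] := VC_edge bVC.
have bzE : [set b; z] \notin E.
  rewrite bridge_edgesE inE; apply/nandP; right; apply/exists_inP => -[u' u'R].
  have /andP [_ u'VC] := inner_comp_sub u'R.
  by case/set2P => Eu'; move: u'VC; rewrite Eu' ?bVC ?zVC.
move: bA; rewrite inE bV /=; apply: contraNT => _; apply/existsP; exists [set b; z].
by rewrite set21 bzE !andbT; apply/edgesP; exists b, z.
Qed.

End InnerComponent.
End Bridges.

Section OuterCycle.
Variables (T D : finType) (hd : D -> T) (alpha sigma : D -> D).
Variables (o : D) (r0 r1 : T) (d0 : D).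
Hypotheses (aK : involutive alpha) (alpha_nfix : forall d, alpha d != d).
Hypotheses (sigma_inj : injective sigma) (hd_sigma : forall d, hd (sigma d) = hd d).
Hypothesis sigma_transitive : forall d d', hd d = hd d' -> fconnect sigma d d'.
Hypothesis hd_surj : forall x, exists d, hd d = x.
Hypothesis euler : #|T| + fcard (face_perm alpha sigma) D = #|D| %/ 2 + 2.
Hypothesis no_loop : forall d, hd (alpha d) != hd d.
Hypothesis no_multi : forall d d', hd d = hd d' -> hd (alpha d) = hd (alpha d') -> d = d'.
Hypothesis card_T : 3 < #|T|.
Hypothesis three_conn : forall S : {set T}, #|S| < 3 -> forall x y, x \notin S -> y \notin S ->
  connect [rel a b | [&& map_adj hd alpha a b, a \notin S & b \notin S]] x y.
Hypotheses (on_r0 : on_face hd (face_perm alpha sigma) o r0)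
  (on_r1 : on_face hd (face_perm alpha sigma) o r1).
Hypotheses (hd_d0 : hd d0 = r0) (hd_ad0 : hd (alpha d0) = r1).

Let e := [set d0; alpha d0].
Let phi := face_perm alpha sigma.
Let phi' := face_perm alpha (del_rot sigma e).
Let g' := del_adj hd alpha e.
Let o' := if o \in e then face_perm alpha sigma o else o.
Let VC := [set x | on_face hd phi' o' x].
Let EC := [set [set hd d; hd (alpha d)] | d in [set d | fconnect phi' o' d]].

(* A vertex with a single dart would be separated from the rest of the graph
   by its only neighbour. *)
Lemma sigma_nfix z : sigma z != z.
Proof.
apply/negP => /eqP sz.
have only_z d : hd d = hd z -> d = z.
  move=> /esym /sigma_transitive c; rewrite -(iter_findex c).
  by elim: (findex _ _ _) => //= n ->.
have [w _ wz] : exists2 w, w \in [set: T] & w \notin [set hd z; hd (alpha z)].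
  apply/subsetPn/negP => /subset_leq_card; rewrite cardsT.
  have : #|[set hd z; hd (alpha z)]| <= 2 by rewrite cards2; case: (_ != _).
  lia.
move: wz; rewrite !inE negb_or => /andP [wz waz].
have := three_conn (S := [set hd (alpha z)]) _ (x := hd z) (y := w).
rewrite cards1 !inE eq_sym no_loop => /(_ isT isT waz) czw.
suff : w == hd z by rewrite (negbTE wz).
apply: (connect_forward_closed (P := fun t => t == hd z)) czw _ => //.
move=> a b /eqP -> /and3P [/existsP [d /andP [/eqP hdz /eqP hdb]] _].
by rewrite !inE -hdb (only_z _ hdz) eqxx.
Qed.

Lemma r0_neq_r1 : r0 != r1.
Proof. by rewrite -hd_d0 -hd_ad0 eq_sym no_loop. Qed.

Lemma alpha_in_e d : (alpha d \in e) = (d \in e).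
Proof. by rewrite !inE !(can2_eq aK aK) aK orbC. Qed.

Lemma e_hd_inj d d' : d \in e -> d' \in e -> hd d = hd d' -> d = d'.
Proof.
move=> /set2P [] -> /set2P [] -> // => [|/esym]; rewrite hd_d0 hd_ad0 => r01;
  by move: r0_neq_r1; rewrite r01 eqxx.
Qed.

Lemma e_cases x y : x \in e -> y \in e -> (y == x) || (y == alpha x).
Proof. by move=> /set2P [] -> /set2P [] ->; rewrite ?aK eqxx ?orbT. Qed.

Lemma phi_inj : injective phi.
Proof. by move=> x y /sigma_inj /(can_inj aK). Qed.

Lemma hd_phi' d : hd (phi' d) = hd (alpha d).
Proof. by rewrite /phi' /face_perm /del_rot; case: ifP; rewrite !hd_sigma. Qed.

Lemma phi'_notin_e d : d \notin e -> phi' d \notin e.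
Proof.
move=> de; have ade : alpha d \notin e by rewrite alpha_in_e.
rewrite /phi' /face_perm /del_rot; case: ifP => [h|/negbT //].
apply/negP => h2; have := e_hd_inj h2 h; rewrite hd_sigma => /(_ erefl) /sigma_inj E.
by move: ade; rewrite -E h.
Qed.

Lemma phi'E d : phi d \notin e -> phi' d = phi d.
Proof. by rewrite /phi' /phi /face_perm /del_rot => /negbTE ->. Qed.

Lemma phi'E_skip d : phi d \in e -> phi' d = phi (alpha (phi d)).
Proof. by move=> h; rewrite /phi' /face_perm /del_rot h /phi /face_perm aK. Qed.

Lemma o'_notin_e : o' \notin e.
Proof.
rewrite /o'; case: ifP => [oe|/negbT //].
apply/negP => h; have oe' : alpha o \in e by rewrite alpha_in_e.
have := e_hd_inj h oe'; rewrite /face_perm hd_sigma => /(_ erefl) E.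
by move: (sigma_nfix (alpha o)); rewrite E eqxx.
Qed.

Lemma outer'_notin_e q : fconnect phi' o' q -> q \notin e.
Proof.
move=> c; rewrite -(iter_findex c); elim: (findex _ _ _) => [|n IH]; first exact: o'_notin_e.
by rewrite iterS; apply: phi'_notin_e.
Qed.

Lemma outer'_hd q : fconnect phi' o' q -> hd q \in VC.
Proof. by move=> c; rewrite inE; apply/existsP; exists q; rewrite c eqxx. Qed.

Lemma outer'_hd_alpha q : fconnect phi' o' q -> hd (alpha q) \in VC.
Proof.
by move=> c; rewrite -hd_phi'; apply: outer'_hd; apply: connect_trans c (fconnect1 _ _).
Qed.

(* Following the faces of L from a dart of the outer face of L', one stays on
   that face until the deleted edge is met; there the face of L' continues on
   the other side of the edge. *)
Lemma outer_face_walk q : fconnect phi' o' q -> forall n,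
  fconnect phi' o' (iter n phi q) \/
  exists x, [/\ x \in e, fconnect phi q x, hd x \in VC & fconnect phi' o' (phi (alpha x))].
Proof.
move=> c n; elim: n q c => [|n IH] q c; first by left.
have c' : fconnect phi' o' (phi' q) by apply: connect_trans c (fconnect1 _ _).
rewrite iterSr; have [qe|qe] := boolP (phi q \in e).
  right; exists (phi q); split => //; first exact: fconnect1.
  - by rewrite /phi /face_perm hd_sigma; apply: outer'_hd_alpha.
  - by rewrite -phi'E_skip.
rewrite phi'E // in c'.
case: (IH _ c') => [|[x [xe cx hx cx']]]; first by left.
by right; exists x; split => //; apply: connect_trans (fconnect1 _ _) cx.
Qed.

Lemma fcard_sigma : fcard sigma D = #|T|.
Proof.
have fsym : connect_sym (frel sigma) by move=> x y; apply: fconnect_sym.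
set R := [set d | roots (frel sigma) d].
have -> : fcard sigma D = #|R| by apply: eq_card => d; rewrite !inE andbT.
have hd_inj : {in R &, injective hd}.
  move=> x y; rewrite !inE => /eqP rx /eqP ry hxy.
  by rewrite -rx -ry; apply/(rootP fsym); apply: sigma_transitive.
rewrite -(card_in_imset hd_inj) -cardsT; apply: eq_card => t; rewrite !inE.
have [d <-] := hd_surj t; apply/imsetP; exists (root (frel sigma) d).
  by rewrite inE roots_root.
apply: (fconnect_invariant (k := hd)) (connect_root _ d) => x.
by rewrite /invariant inE hd_sigma eqxx.
Qed.

Let ps := perm sigma_inj.

Lemma face_on_setT : face_on ps aK setT =1 phi.
Proof. by move=> d; rewrite permM !permE /alpha_fun !inE. Qed.

Lemma planar_porbits : #|porbits ps| + #|porbits (face_on ps aK setT)| = #|D| %/ 2 + 2.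
Proof.
rewrite (card_porbits_fcard face_on_setT) (card_porbits_fcard (permE sigma_inj)).
by rewrite fcard_sigma; exact: euler.
Qed.

Lemma setD_e x : x \in e -> [set: D] :\ x :\ alpha x = ~: e.
Proof.
by move=> /set2P [] ->; apply/setP => d; rewrite !inE ?aK negb_or andbT // andbC.
Qed.

(* L - e is connected: L - r0 is connected by 3-connectivity, and r0 keeps the
   edges other than e, of which there is at least one. *)
Lemma connected_del_edge u v : connect (map_rel alpha ps (~: e)) u v.
Proof.
set r := map_rel alpha ps _.
have rsym : connect_sym r by apply: sym_connect_sym; apply: map_rel_sym.
have r_sigma d d' : fconnect sigma d d' -> connect r d d'.
  by apply: connect_sub => b c /eqP <-; apply: connect1; rewrite /r /map_rel permE eqxx.
have r_alpha d : d \notin e -> connect r d (alpha d).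
  by move=> de; apply: connect1; rewrite /r /map_rel !in_setC alpha_in_e de eqxx !orbT.
pose reached t := [forall d, (hd d == t) ==> connect r d0 d].
have reachedP t d : reached t -> hd d = t -> connect r d0 d.
  by move=> /forallP /(_ d) /implyP + hdt; apply; rewrite hdt.
have reached_step d : d \notin e -> reached (hd d) -> reached (hd (alpha d)).
  move=> de Rd; apply/forallP => d'; apply/implyP => /eqP hd'.
  apply: connect_trans (reachedP _ _ Rd erefl) (connect_trans (r_alpha _ de) _).
  exact/r_sigma/sigma_transitive.
have reached_r0 : reached r0.
  apply/forallP => d; apply/implyP => /eqP hd'.
  by apply/r_sigma/sigma_transitive; rewrite hd_d0.
have sd0e : sigma d0 \notin e.
  rewrite !inE negb_or sigma_nfix /=; apply: contra_neq r0_neq_r1 => E.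
  by rewrite -hd_d0 -hd_ad0 -E hd_sigma.
set y := hd (alpha (sigma d0)).
have reached_y : reached y by apply: reached_step => //; rewrite hd_sigma hd_d0.
have yr0 : y != r0 by rewrite /y -hd_d0 -(hd_sigma d0) no_loop.
have all_reached t : reached t.
  have [-> //|tr0] := eqVneq t r0.
  have := three_conn (S := [set r0]) _ (x := y) (y := t).
  rewrite cards1 !inE yr0 tr0 => /(_ isT isT isT) cyt.
  apply: (connect_forward_closed (P := reached)) cyt reached_y.
  move=> a b Ra /and3P [/existsP [d /andP [/eqP hda /eqP hdb]]].
  rewrite !inE => ar0 br0.
  have de : d \notin e.
    rewrite !inE negb_or; apply/andP; split; apply/eqP => E.
    - by move: ar0; rewrite -hda E hd_d0 eqxx.
    - by move: br0; rewrite -hdb E aK hd_d0 eqxx.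
  by rewrite -hdb; apply: reached_step => //; rewrite hda.
by apply: connect_trans (reachedP _ v (all_reached _) erefl); rewrite rsym; apply: reachedP.
Qed.

Lemma faces_distinct x : x \in e -> ~~ fconnect phi (alpha x) x.
Proof.
move=> xe; rewrite -(porbit_fconnect face_on_setT).
apply: (planar_edge_faces_distinct alpha_nfix planar_porbits).
by rewrite (setD_e xe); apply: connected_del_edge.
Qed.

(* Going on from the other side of the edge, the face of L' reaches alpha x
   before meeting e again, because x and alpha x lie on distinct faces of L. *)
Lemma e_ends_in_VC x : x \in e -> hd x \in VC -> fconnect phi' o' (phi (alpha x)) ->
  (r0 \in VC) && (r1 \in VC).
Proof.
move=> xe hx cq.
have cqa : fconnect phi (phi (alpha x)) (alpha x).
  by rewrite fconnect_sym; [apply: fconnect1 | apply: phi_inj].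
have hax : hd (alpha x) \in VC.
  have := outer_face_walk cq (findex phi (phi (alpha x)) (alpha x)); rewrite iter_findex //.
  case=> [c|[x' [x'e cx' hx' _]]].
    by move: (outer'_notin_e c); rewrite alpha_in_e xe.
  case/orP: (e_cases xe x'e) => /eqP E; last by rewrite -E.
  rewrite E in cx'; move: (faces_distinct xe).
  by rewrite (connect_trans (fconnect1 phi (alpha x)) cx').
by case/set2P: xe hx hax => ->; rewrite ?aK hd_d0 hd_ad0 => h0 h1; apply/andP.
Qed.

Lemma outer_end_in_VC r : (r == r0) || (r == r1) -> on_face hd phi o r -> r \in VC.
Proof.
move=> hr /existsP [d /andP [cod /eqP hdr]].
have co'd : fconnect phi o' d.
  rewrite /o'; case: ifP => // _.
  by rewrite -same_fconnect1 //; apply: phi_inj.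
case: (outer_face_walk (connect0 _ o') (findex phi o' d)) => [|[x [xe _ hx cq]]].
  by rewrite iter_findex // -hdr; apply: outer'_hd.
by have /andP [] := e_ends_in_VC xe hx cq; case/orP: hr => /eqP ->.
Qed.

Lemma r0_in_VC : r0 \in VC. Proof. by apply: outer_end_in_VC on_r0; rewrite eqxx. Qed.
Lemma r1_in_VC : r1 \in VC. Proof. by apply: outer_end_in_VC on_r1; rewrite eqxx orbT. Qed.

Lemma outer_cycle_card : 3 <= #|VC|.
Proof.
rewrite leqNgt; apply/negP => small.
have in01 t : t \in VC -> (t == r0) || (t == r1).
  move=> tVC; apply/negPn/negP; rewrite negb_or => /andP [t0 t1].
  move: small; rewrite ltnNge; apply/negP/negPn/card_gt2P.
  by exists r0, r1, t; rewrite r0_in_VC r1_in_VC tVC r0_neq_r1 eq_sym t1 t0.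
have co := connect0 (frel phi') o'.
move: o'_notin_e; rewrite !inE negb_or => /andP [/negP n0 /negP n1].
case/orP: (in01 _ (outer'_hd co)) => /eqP hp; case/orP: (in01 _ (outer'_hd_alpha co)) => /eqP hq.
- by move: (no_loop o'); rewrite hp hq eqxx.
- by apply: n0; apply/eqP/no_multi; rewrite ?hd_d0 ?hd_ad0.
- by apply: n1; apply/eqP/no_multi; rewrite ?aK ?hd_d0 ?hd_ad0.
- by move: (no_loop o'); rewrite hp hq eqxx.
Qed.

Lemma g'_sym : symmetric g'.
Proof.
suff imp x y : g' x y -> g' y x by move=> x y; apply/idP/idP; apply: imp.
case/existsP => d /and3P [de /eqP hx /eqP hy]; apply/existsP; exists (alpha d).
by rewrite alpha_in_e de aK hx hy !eqxx.
Qed.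

Lemma VC_edge : {in VC, forall y, exists2 z, z \in VC & g' y z}.
Proof.
move=> y; rewrite inE => /existsP [d /andP [cd /eqP hdy]].
exists (hd (alpha d)); first exact: outer'_hd_alpha.
by apply/existsP; exists d; rewrite (outer'_notin_e cd) hdy !eqxx.
Qed.

Lemma map_adj_del u b : u \notin VC -> map_adj hd alpha u b -> g' u b.
Proof.
move=> uVC /existsP [d /andP [/eqP hdu hdb]]; apply/existsP; exists d.
rewrite hdb hdu eqxx !andbT; apply/negP => /set2P [] E; move: uVC; rewrite -hdu E.
- by rewrite hd_d0 r0_in_VC.
- by rewrite hd_ad0 r1_in_VC.
Qed.

Lemma outer_bridge_attachments V E : is_bridge g' VC EC V E -> ~~ trivial_bridge V E ->
  3 <= #|attachments g' V E|.
Proof.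
move=> bridgeVE ntriv; rewrite leqNgt; apply/negP => smallA.
set A := attachments g' V E in smallA.
have [v vV vVC] := bridge_inner_vertex bridgeVE ntriv.
have AVC := attachments_subVC bridgeVE.
have [w wVC wA] : exists2 w, w \in VC & w \notin A.
  apply/subsetPn/negP => /subset_leq_card; have := outer_cycle_card; lia.
have vA : v \notin A by apply: contra vVC; apply: (subsetP AVC).
pose R := [set u | connect (inner_rel g' VC) v u].
have wR : w \in R.
  apply: (connect_forward_closed (P := fun u => u \in R)) (three_conn smallA vA wA) _; last first.
    by rewrite inE connect0.
  move=> u b uR /and3P [Lub _ bA].
  apply: (inner_comp_exit g'_sym VC_edge bridgeVE vV vVC uR) _ bA.
  by apply: map_adj_del Lub; have /andP [] := inner_comp_sub bridgeVE vV vVC uR.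
by have /andP [_] := inner_comp_sub bridgeVE vV vVC wR; rewrite wVC.
Qed.

End OuterCycle.

Theorem claim2 (T D : finType) (hd : D -> T) (alpha sigma : D -> D)
    (o : D) (r0 r1 : T) (d0 : D) :
  planar_map hd alpha sigma ->
  simple_map hd alpha ->
  k_connected (map_adj hd alpha) 3 ->
  4 <= #|T| ->
  (* o is a dart of the outer face of L; r0, r1 lie on it *)
  on_face hd (face_perm alpha sigma) o r0 ->
  on_face hd (face_perm alpha sigma) o r1 ->
  (* d0 is the dart of the edge (r0, r1) *)
  hd d0 = r0 -> hd (alpha d0) = r1 ->
  let e := [set d0; alpha d0] in
  (* embedding of L' = L - (r0, r1) *)
  let phi' := face_perm alpha (del_rot sigma e) in
  let g' := del_adj hd alpha e in
  (* a dart of the outer face of L' *)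
  let o' := if o \in e then face_perm alpha sigma o else o in
  (* C = boundary of the outer face of L' *)
  let VC := [set x | on_face hd phi' o' x] in
  let EC := [set [set hd d; hd (alpha d)] | d in [set d | fconnect phi' o' d]] in
  forall (V : {set T}) (E : {set {set T}}),
    is_bridge g' VC EC V E -> ~~ trivial_bridge V E ->
    3 <= #|attachments g' V E|.
Proof.
move=> [[aK alpha_nfix sigma_inj hd_sigma [sigma_tr hd_surj]] _ euler]
  [no_loop no_multi] [card_T three_conn] _ on_r0 on_r1 hd_d0 hd_ad0.
exact: (outer_bridge_attachments aK alpha_nfix sigma_inj hd_sigma sigma_tr hd_surj
  euler no_loop no_multi card_T three_conn on_r0 on_r1 hd_d0 hd_ad0).
Qed.
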